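(* Let $V$ be a $C^1$ vector field on a closed Riemannian manifold $M$ and let $r_0>0$ be a constant with properties (P1)–(P3) below. There exists $\delta_0>0$ such that for any $\delta\in(0,\delta_0)$, any $x\in M\setminus Sing(V)$, any $y\in M$ and any increasing homeomorphism $h:\mathbb{R}\to\mathbb{R}$: if $d(V_t(x),V_{h(t)}(y))<\delta\|V(V_t(x))\|$ for all $t\in\mathbb{R}$ and $V_{h(0)}(y)\in V_{(-r_0,r_0)}(x)$, then $V_{h(t)}(y)\in V_{(-3\delta,3\delta)}(V_t(x))$ for every $t\in\mathbb{R}$.
   Context: $M$ is a compact connected boundaryless manifold with Riemannian metric $\|\cdot\|$, distance $d$, exponential map $\exp$; $V_t$ is the flow of $V$, $V_I(x)=\{V_t(x):t\in I\}$, $Sing(V)=\{V=0\}$, $B(x,r)$ the open ball. For $x\notin Sing(V)$ and $r>0$ set $N_x(r)=\{v\in T_xM: v\perp V(x),\|v\|<r\}$, $U_x(r)=\{v+tV(x): v\in N_x(r\|V(x)\|), |t|<r\}$, and $F_x:U_x(r)\to M$, $F_x(v+tV(x))=V_t(\exp_x(v))$. The constant $r_0>0$ (whose existence is known) satisfies, for every $x\in M\setminus Sing(V)$: (P1) $F_x:U_x(r_0)\to M$ is an embedding with $\|D_pF_x\|<3$ and $\inf_{\|v\|=1}\|D_pF_x v\|>1/3$ for all $p\in U_x(r_0)$; (P2) if $0<\delta<r_0/3$, $t\in\mathbb{R}$ and $V_{[0,t]}(x)\subset B(x,\delta\|V(x)\|)$, then $|t|<3\delta$; (P3) if $0<\delta<r_0/3$,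 $|t|<r_0$ and $V_t(x)\in B(x,\delta\|V(x)\|)$, then $|t|<3\delta$. *)

From Stdlib Require Import Reals.
Open Scope R_scope.

(* Abstract setting: the closed Riemannian manifold M is seen through its
   Riemannian distance d, the flow V_t of V and the speed x |-> ||V(x)||. *)

Definition is_metric {M : Type} (d : M -> M -> R) : Prop :=
  (forall x y, 0 <= d x y) /\
  (forall x y, d x y = 0 <-> x = y) /\
  (forall x y, d x y = d y x) /\
  (forall x y z, d x z <= d x y + d y z).

Definition ball_d {M : Type} (d : M -> M -> R) (x : M) (r : R) : M -> Prop :=
  fun z => d x z < r.

Definition open_d {M : Type} (d : M -> M -> R) (U : M -> Prop) : Prop :=
  forall x, U x -> exists r, 0 < r /\ forall z, ball_d d x r z -> U z.

Definition compact_d {M : Type} (d : M -> M -> R) : Prop :=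
  forall u : nat -> M, exists (phi : nat -> nat) (l : M),
    (forall n m, (n < m)%nat -> (phi n < phi m)%nat) /\
    forall eps, 0 < eps -> exists N, forall n, (N <= n)%nat -> d (u (phi n)) l < eps.

Definition connected_d {M : Type} (d : M -> M -> R) : Prop :=
  forall U W : M -> Prop, open_d d U -> open_d d W ->
    (forall x, U x \/ W x) -> (forall x, ~ (U x /\ W x)) ->
    (forall x, U x) \/ (forall x, W x).

Definition nonempty (M : Type) : Prop := exists x : M, True.

Definition is_flow {M : Type} (d : M -> M -> R) (Vt : R -> M -> M) : Prop :=
  (forall x, Vt 0 x = x) /\
  (forall s t x, Vt (s + t) x = Vt s (Vt t x)) /\
  (forall t x eps, 0 < eps -> exists eta, 0 < eta /\
     forall s z, Rabs (s - t) < eta -> d x z < eta -> d (Vt t x) (Vt s z) < eps).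

(* speed function nV x = ||V(x)||: continuous, nonnegative, and vanishing
   exactly at singularities (= fixed points of the flow). *)
Definition is_speed {M : Type} (d : M -> M -> R) (Vt : R -> M -> M) (nV : M -> R) : Prop :=
  (forall x, 0 <= nV x) /\
  (forall x, nV x = 0 <-> forall t, Vt t x = x) /\
  (forall x eps, 0 < eps -> exists eta, 0 < eta /\
     forall z, d x z < eta -> Rabs (nV x - nV z) < eps).

Definition Sing {M : Type} (nV : M -> R) (x : M) : Prop := nV x = 0.

Definition orbit_seg {M : Type} (Vt : R -> M -> M) (a b : R) (x : M) : M -> Prop :=
  fun z => exists t, a < t < b /\ z = Vt t x.

Definition P2 {M : Type} (d : M -> M -> R) (Vt : R -> M -> M) (nV : M -> R) (r0 : R) : Prop :=
  forall x, ~ Sing nV x -> forall delta t, 0 < delta < r0 / 3 ->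
    (forall s, (0 <= s <= t \/ t <= s <= 0) -> ball_d d x (delta * nV x) (Vt s x)) ->
    Rabs t < 3 * delta.

Definition P3 {M : Type} (d : M -> M -> R) (Vt : R -> M -> M) (nV : M -> R) (r0 : R) : Prop :=
  forall x, ~ Sing nV x -> forall delta t, 0 < delta < r0 / 3 -> Rabs t < r0 ->
    ball_d d x (delta * nV x) (Vt t x) -> Rabs t < 3 * delta.

Definition incr_homeo (h : R -> R) : Prop :=
  (forall s t, s < t -> h s < h t) /\
  (forall t, continuity_pt h t) /\
  (forall u, exists t, h t = u).

(* Writing V_{h(t)}(y) = V_{g(t)}(V_t(x)) with the continuous time shift
   g(t) = h(t) - h(0) + s0 - t, where V_{h(0)}(y) = V_{s0}(x) and |s0| < r0,
   property (P3) says that |g(t)| < r0 forces |g(t)| < 3 delta.  For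
   delta < r0/3 this is a gap [3 delta, r0) that the continuous function |g|
   cannot cross, and |g(0)| = |s0| lies below it. *)
From Stdlib Require Import Reals Lra Psatz.
Open Scope R_scope.

Lemma continuity_Rabs_gap (f : R -> R) (a b t0 : R) :
  continuity f -> a < b -> Rabs (f t0) < a ->
  (forall t, Rabs (f t) < b -> Rabs (f t) < a) ->
  forall t, Rabs (f t) < a.
Proof.
  intros fc ab ft0 gap t.
  destruct (Rlt_or_le (Rabs (f t)) a) as [lt | ge]; [exact lt | exfalso].
  set (F := fun u => Rabs (f u) - a).
  assert (Fc : continuity F).
  { apply continuity_minus; [| apply continuity_const; intros ? ?; reflexivity].
    exact (continuity_comp f Rabs fc Rcontinuity_abs). }
  assert (zero : exists z, F z = 0).
  { destruct (Rle_or_lt t0 t) as [le | lt].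
    - destruct (IVT_cor F t0 t Fc le) as [z [_ Fz]]; [unfold F; nra | eauto].
    - destruct (IVT_cor F t t0 Fc (Rlt_le _ _ lt)) as [z [_ Fz]];
        [unfold F; nra | eauto]. }
  destruct zero as [z Fz]; unfold F in Fz.
  assert (Rabs (f z) < a) by (apply gap; lra).
  lra.
Qed.

Section Flow.

Variables (M : Type) (Vt : R -> M -> M).
Hypothesis flow0 : forall x, Vt 0 x = x.
Hypothesis flow_add : forall s t x, Vt (s + t) x = Vt s (Vt t x).

Lemma flow_fixed_orbit (x : M) (u : R) :
  (forall s, Vt s (Vt u x) = Vt u x) -> forall s, Vt s x = x.
Proof.
  intros fixed s.
  replace s with (- u + (s + u)) by ring.
  rewrite flow_add, flow_add, fixed, <- flow_add.
  replace (- u + u) with 0 by ring.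
  apply flow0.
Qed.

Lemma flow_shift (x y : M) (h : R -> R) (s0 t : R) :
  Vt (h 0) y = Vt s0 x ->
  Vt (h t) y = Vt (h t + (s0 - h 0) - t) (Vt t x).
Proof.
  intros y0.
  rewrite <- flow_add.
  replace (h t + (s0 - h 0) - t + t) with (h t - h 0 + s0) by ring.
  rewrite flow_add, <- y0, <- flow_add.
  f_equal; ring.
Qed.

End Flow.

Lemma nonsing_orbit {M : Type} (d : M -> M -> R) (Vt : R -> M -> M)
    (nV : M -> R) (x : M) (u : R) :
  is_flow d Vt -> is_speed d Vt nV -> ~ Sing nV x -> ~ Sing nV (Vt u x).
Proof.
  intros [flow0 [flow_add _]] [_ [sing_fixed _]] nsx su.
  apply nsx, sing_fixed.
  exact (flow_fixed_orbit M Vt flow0 flow_add x u (proj1 (sing_fixed _) su)).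
Qed.

Lemma continuity_time_shift (h : R -> R) (c : R) :
  (forall t, continuity_pt h t) -> continuity (fun t => h t + c - t).
Proof.
  intros hc.
  apply continuity_minus; [| apply derivable_continuous, derivable_id].
  apply continuity_plus; [exact hc | apply continuity_const; intros ? ?; reflexivity].
Qed.

Theorem lemma2p6 :
  forall (M : Type) (d : M -> M -> R) (Vt : R -> M -> M) (nV : M -> R) (r0 : R),
    nonempty M -> is_metric d -> compact_d d -> connected_d d ->
    is_flow d Vt -> is_speed d Vt nV ->
    0 < r0 -> P2 d Vt nV r0 -> P3 d Vt nV r0 ->
    exists delta0, 0 < delta0 /\
      forall delta, 0 < delta < delta0 ->
      forall (x : M), ~ Sing nV x ->
      forall (y : M) (h : R -> R), incr_homeo h ->
        (forall t, d (Vt t x) (Vt (h t) y) < delta * nV (Vt t x)) ->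
        orbit_seg Vt (- r0) r0 x (Vt (h 0) y) ->
        forall t, orbit_seg Vt (- (3 * delta)) (3 * delta) (Vt t x) (Vt (h t) y).
Proof.
  intros M d Vt nV r0 _ _ _ _ flow speed r0_pos _ P3_r0.
  pose proof flow as [_ [flow_add _]].
  exists (r0 / 3); split; [lra |].
  intros delta delta_bd x nsx y h [_ [hc _]] shadow [s0 [s0_bd y0]] t.
  set (g := fun t => h t + (s0 - h 0) - t).
  assert (shift : forall u, Vt (h u) y = Vt (g u) (Vt u x))
    by (intro u; exact (flow_shift M Vt flow_add x y h s0 u y0)).
  assert (gap : forall u, Rabs (g u) < r0 -> Rabs (g u) < 3 * delta).
  { intros u gu.
    apply (P3_r0 (Vt u x) (nonsing_orbit d Vt nV x u flow speed nsx));
      [lra | exact gu |].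
    unfold ball_d; rewrite <- shift; apply shadow. }
  assert (g0 : Rabs (g 0) < 3 * delta).
  { apply gap; unfold g; replace (h 0 + (s0 - h 0) - 0) with s0 by ring.
    apply Rabs_def1; lra. }
  assert (gt : Rabs (g t) < 3 * delta).
  { apply (continuity_Rabs_gap g (3 * delta) r0 0); try assumption; [| lra].
    apply continuity_time_shift, hc. }
  exists (g t); split; [apply Rabs_def2 in gt; lra | apply shift].
Qed.
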